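(* Let $h=0$ and let $x$ be a piecewise constant functional order parameter as in the context, with $1-\lambda+\beta^2Q>0$ and $\beta^2\sigma^2(Q)\int_q^Qx(q')\,dq'<1$ for all $q\in[0,Q]$. Then for every $N$, $$\varphi_N(0;x)=\log\sigma(Q)+f(0,0;x),$$ where $f(\cdot,\cdot;x)$ is the solution of the Parisi equation $\partial_qf+\frac12\big(\partial_y^2f+x(q)(\partial_yf)^2\big)=0$ on $[0,Q]\times\mathbb R$ with final condition $f(Q,y)=\frac{\beta^2}{2}\sigma^2(Q)y^2$, i.e. $f(Q,y)=\frac{\beta^2}{2}\sigma^2(Q)y^2$ and, for $a=K,\dots,1$ and $q\in[q_{a-1},q_a]$, $$f(q,y)=\frac1{m_a}\log\mathbb E_g\exp\big(m_a f(q_a,y+\sqrt{q_a-q}\,g)\big)\quad(\text{resp. } f(q,y)=\mathbb E_g f(q_a,y+\sqrt{q_a-q}\,g)\text{ if } m_a=0),$$ with $g\sim\mathcal N(0,1)$.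
   Context: Fix $\beta>0$, $\lambda\in\mathbb R$, $h=0$. A piecewise constant functional order parameter $x$ is given by an integer $K\ge1$ and numbers $0=q_0\le q_1\le\dots\le q_K=Q$, $0\le m_1\le\dots\le m_K\le1$, with $x(q)=m_a$ for $q\in[q_{a-1},q_a)$. $\sigma(Q)=(1-\lambda+\beta^2Q)^{-1/2}$. Let $J_{ij}$ ($1\le i,j\le N$) and $J^a_i$ ($a=1,\dots,K$, $i=1,\dots,N$) be independent i.i.d. $\mathcal N(0,1)$; $\mathbb E_0$ is expectation over $J$, $\mathbb E_a$ over $(J^a_i)_i$. With $\mathbb E_z$ integration against the standard Gaussian measure on $\mathbb R^N$ and $C=-\beta^2Q$, for $t\in[0,1]$ $$\tilde Z_N(t;x)=\mathbb E_z\exp\Big(\beta\sqrt{\tfrac{t}{2N}}\sum_{i,j}J_{ij}z_iz_j-\tfrac{t\beta^2}{4N}\big(\textstyle\sum_iz_i^2\big)^2+\beta\sqrt{1-t}\sum_{a=1}^K\sqrt{q_a-q_{a-1}}\sum_iJ^a_iz_i+\tfrac{(1-t)C}{2}\sum_iz_i^2+\tfrac\lambda2\sum_iz_i^2\Big).$$ Set $Z_K=\tilde Z_N$, $Z_{a-1}=(\mathbb E_aZ_a^{m_a})^{1/m_a}$ for $a=K,\dots,1$ (with $Z_{a-1}=\exp\mathbb E_a\log Z_a$ if $m_a=0$), and $\varphi_N(t;x)=\frac1N\mathbb E_0\log Z_0$. *)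

From Stdlib Require Import Reals Lra ClassicalEpsilon.
Open Scope R_scope.

Definition is_imp_int (f : R -> R) (l : R) : Prop :=
  forall eps, 0 < eps -> exists M, forall a b, a <= -M -> M <= b ->
    exists pr : Riemann_integrable f a b, Rabs (RiemannInt pr - l) < eps.

(* The improper integral (chosen by classical choice; 0 if it does not exist). *)
Definition imp_int (f : R -> R) : R :=
  epsilon (inhabits 0) (fun l => is_imp_int f l).

Definition gauss_density (g : R) : R := exp (- (g * g) / 2) / sqrt (2 * PI).

Definition Eg (F : R -> R) : R := imp_int (fun g => gauss_density g * F g).

(* Standard Gaussian expectation on R^n (coordinates 0..n-1), as iterated
   one-dimensional Gaussian integrals. Vectors are functions nat -> R. *)
Fixpoint Evec (n : nat) (F : (nat -> R) -> R) : R :=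
  match n with
  | O => F (fun _ => 0)
  | S n' => Eg (fun g => Evec n' (fun z => F (fun i => if Nat.eqb i n' then g else z i)))
  end.

(* Gaussian expectation over an N x N matrix of iid N(0,1) (rows 0..r-1). *)
Fixpoint Emat (N r : nat) (F : (nat -> nat -> R) -> R) : R :=
  match r with
  | O => F (fun _ _ => 0)
  | S r' => Evec N (fun g => Emat N r' (fun J => F (fun i j => if Nat.eqb i r' then g j else J i j)))
  end.

Fixpoint rsum (n : nat) (f : nat -> R) : R :=
  match n with O => 0 | S n' => rsum n' f + f n' end.

Definition Reqb (x y : R) : bool :=
  if Req_dec_T x y then true else false.

(* A piecewise constant order parameter is given by K, q : nat -> R
   (q 0 = 0 <= q 1 <= ... <= q K = Q) and m : nat -> R (m 1 <= ... <= m K). *)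

Fixpoint srch_lt (q : nat -> R) (qv : R) (a fuel : nat) : nat :=
  match fuel with
  | O => a
  | S f => if Rlt_dec qv (q a) then a else srch_lt q qv (S a) f
  end.

(* x(q') = m_a for q' in [q_{a-1}, q_a) (and m_K for q' >= Q). *)
Definition xfun (K : nat) (q m : nat -> R) (qv : R) : R :=
  m (srch_lt q qv 1 (K - 1)).

Definition sigmaQ (beta lam Q : R) : R := / sqrt (1 - lam + beta ^ 2 * Q).

(* J : the N x N couplings J_{ij} (indices 0..N-1);
   Js a i = J^a_i for a = 1..K, i = 0..N-1. *)
Definition Hint (N K : nat) (q : nat -> R) (beta lam t : R)
  (J Js : nat -> nat -> R) (z : nat -> R) : R :=
  let Q := q K in
  let C := - beta ^ 2 * Q in
  let nN := INR N in
  let sz := rsum N (fun i => z i * z i) in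
  beta * sqrt (t / (2 * nN)) * rsum N (fun i => rsum N (fun j => J i j * z i * z j))
  - t * beta ^ 2 / (4 * nN) * sz ^ 2
  + beta * sqrt (1 - t) *
      rsum K (fun a => sqrt (q (S a) - q a) * rsum N (fun i => Js (S a) i * z i))
  + (1 - t) * C / 2 * sz
  + lam / 2 * sz.

Definition Ztilde (N K : nat) (q : nat -> R) (beta lam t : R) (J Js : nat -> nat -> R) : R :=
  Evec N (fun z => exp (Hint N K q beta lam t J Js z)).

(* Zlev j = Z_{K-j}: Z_K = Ztilde, Z_{a-1} = (E_a Z_a^{m_a})^{1/m_a},
   resp. exp (E_a log Z_a) if m_a = 0. *)
Fixpoint Zlev (N K : nat) (q m : nat -> R) (beta lam t : R) (j : nat)
  : (nat -> nat -> R) -> (nat -> nat -> R) -> R :=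
  match j with
  | O => fun J Js => Ztilde N K q beta lam t J Js
  | S j' => fun J Js =>
      let a := (K - j')%nat in
      let Fa := fun g : nat -> R =>
        Zlev N K q m beta lam t j' J (fun b i => if Nat.eqb b a then g i else Js b i) in
      if Reqb (m a) 0 then exp (Evec N (fun g => ln (Fa g)))
      else Rpower (Evec N (fun g => Rpower (Fa g) (m a))) (/ m a)
  end.

Definition phiN (N K : nat) (q m : nat -> R) (beta lam t : R) : R :=
  / INR N * Emat N N (fun J => ln (Zlev N K q m beta lam t K J (fun _ _ => 0))).

(* f(qv, y) computed from f(q_a, .) on [q_{a-1}, q_a] *)
Definition parisi_step (ma qa qv : R) (fa : R -> R) (y : R) : R :=
  if Reqb ma 0 then Eg (fun g => fa (y + sqrt (qa - qv) * g))
  else / ma * ln (Eg (fun g => exp (ma * fa (y + sqrt (qa - qv) * g)))).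

(* fdown j = f(q_{K-j}, .) *)
Fixpoint fdown (K : nat) (q m : nat -> R) (beta lam : R) (j : nat) : R -> R :=
  match j with
  | O => fun y => beta ^ 2 / 2 * (sigmaQ beta lam (q K)) ^ 2 * y ^ 2
  | S j' => fun y =>
      let a := (K - j')%nat in
      parisi_step (m a) (q a) (q (a - 1)%nat) (fdown K q m beta lam j') y
  end.

Fixpoint srch_le (q : nat -> R) (qv : R) (a fuel : nat) : nat :=
  match fuel with
  | O => a
  | S f => if Rle_dec qv (q a) then a else srch_le q qv (S a) f
  end.

Definition parisi_f (K : nat) (q m : nat -> R) (beta lam : R) (qv y : R) : R :=
  let a := srch_le q qv 1 (K - 1) in
  parisi_step (m a) (q a) qv (fdown K q m beta lam (K - a)) y.

(* At t = 0 the Hamiltonian decouples over spins: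
     H = sum_i [ - (P - 1) z_i^2 / 2 + beta h_i z_i ],   P = 1 - lam + beta^2 Q,
   where h_i = sum_a sqrt (q_a - q_{a-1}) J^a_i is a "cavity field".  Completing
   the square in one Gaussian integral gives Z_K = prod_i sigma exp f(Q, h_i),
   with f(Q, y) = beta^2 sigma^2 y^2 / 2.  All f(q_a, .) are quadratics
   A_a y^2 / 2 + C_a, and averaging over the fields J^a of level a acts spin by
   spin as one step of the Parisi recursion, so Z_{a-1} = prod_i sigma
   exp f(q_{a-1}, h^(a-1)_i).  The steps are well defined because the curvature
   recursion A -> A / (1 - m_a A (q_a - q_{a-1})) is solved by
   A = alpha / (1 - alpha int_{q_a}^Q x), alpha = beta^2 sigma^2, which the
   hypothesis keeps finite.  At level 0 the cavity field vanishes, Z_0 =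
   (sigma exp f(0, 0))^N is deterministic and phi_N = log sigma + f(0, 0). *)

From Stdlib Require Import Reals Lra Lia ClassicalEpsilon FunctionalExtensionality.
From mathcomp Require all_boot all_order all_algebra.
From mathcomp Require all_classical all_reals all_analysis.
From mathcomp Require Rstruct Rstruct_topology.
Open Scope R_scope.

Module GaussianIntegral.
Import all_boot all_order all_algebra.
Import all_classical all_reals all_analysis.
Import Rstruct Rstruct_topology.
Import Order.TTheory GRing.Theory Num.Theory.
Import numFieldNormedType.Exports.
Local Open Scope classical_set_scope.
Local Open Scope ring_scope.

(* Both cosines are the sum of the same power series. *)
Lemma RcosE (x : R) : Rtrigo_def.cos x = cos x.
Proof.
rewrite /Rtrigo_def.cos; case: exist_cos => y.
rewrite /cos_in /infinite_sum => Hy.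
have Hc : (series (cos_coeff' x) : nat -> R^o) @ \oo --> (y : R^o).
  rewrite -cvg_shiftS /=; apply/cvgrPdist_lt => /= e /RltP /Hy[N HN].
  near=> n.
  have nN : (n >= N)%coq_nat by apply/ssrnat.leP; near: n; exact: nbhs_infty_ge.
  move: HN => /(_ _ nN) /[!RdistE] /RltP /=.
  rewrite distrC sum_f_R0E; congr (`| _ - _ | < e).
  apply: eq_bigr => k _; rewrite /cos_coeff' /cos_n.
  rewrite RdivE RpowE INRE factE -mul2n /Rsqr RpowE.
  have -> : (x * x)%coqR = x ^+ 2 by rewrite expr2.
  rewrite -exprM mulnC mulrAC.
  by have -> : ((2 * k)%coq_nat = k * 2)%N by rewrite mulnC.
exact: (cvg_unique _ Hc (@cvg_cos_coeff' R x)).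
Unshelve. all: by end_near. Qed.

Lemma R2E : (2%:R : R) = 2%coqR.
Proof. rewrite -INRE /=; lra. Qed.

(* Both [pi / 2] are the unique zero of [cos] in [[0, 2]]. *)
Lemma RpiE : pi = PI.
Proof.
have PI2 := PI2_3_2.
have half : (pi / 2 = PI / 2)%R.
  rewrite pihalfE; apply: get_unique.
    split; last by rewrite -RcosE cos_PI2.
    have := PI_4 => PI4.
    apply/andP; split; apply/RleP; rewrite R2E -?RinvE -?RmultE -?R0E; lra.
  move=> y [/andP[/RleP y0 /RleP y2] cy]; rewrite -RcosE in cy.
  rewrite R2E in y2; rewrite -?R0E in y0.
  case: (Rtotal_order y (PI / 2)) => [yl|[//|yg]].
    by have := cos_gt_0 y ltac:(lra) yl; rewrite cy => /Rlt_irrefl.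
  by have := cos_lt_0 y yg ltac:(lra); rewrite cy => /Rlt_irrefl.
rewrite R2E -?RinvE -?RmultE in half.
apply: (Rmult_eq_reg_r (/ 2)%coqR) => //; apply: Rinv_neq_0_compat; lra.
Qed.

Lemma derivable_pt_lim_derive1 (F : R^o -> R^o) (x : R^o) :
  derivable F x 1 -> derivable_pt_lim F x (derive1 F x).
Proof.
rewrite derive1E /derivable /derive => dF e /RltP e0.
have := (proj1 (cvgrPdist_lt _ _) dF) e e0.
move=> /(_ ltac:(typeclasses eauto)); rewrite /prop_near1 /= => /nbhs_ballP [r /= r0 Hr].
have r0' : (0 < r)%coqR by apply/RltP.
exists (mkposreal r r0') => h h0 hr.
have hb : ball (0 : R^o) r h by rewrite /ball /= sub0r normrN -RabsE; apply/RltP.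
have hn : h != 0 by apply/eqP.
have /= := Hr h hb hn; rewrite RabsE distrC.
by rewrite /GRing.scale /= mulr1 (addrC h x) mulrC => /RltP.
Qed.

Lemma gauss_antiderivative : exists F : R -> R,
  (forall x, (0 < x)%coqR -> derivable_pt_lim F x (Rtrigo_def.exp (- (x * x)))) /\
  (forall x, (0 <= x)%coqR -> (0 <= F x)%coqR /\ (F x <= x)%coqR) /\
  (forall e, (0 < e)%coqR -> exists M, forall x, (M < x)%coqR ->
      (Rabs (F x * F x - PI / 4) < e)%coqR).
Proof.
exists (gauss_integral_proof.integral0_gauss (R:=R)); split; [|split].
- move=> x /RltP x0.
  have xu : x < x + 1 by rewrite ltrDl.
  have ax : (BLeft (0 : R) < BRight x)%E by rewrite /= lte_fin.
  have ig : lebesgue_measure.-integrable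
      [set` Interval (BLeft (0 : R)) (BRight (x + 1))] (EFin \o (@gauss_fun R)).
    apply: continuous_compact_integrable => //; first exact: segment_compact.
    by apply: continuous_subspaceT; exact: continuous_gauss_fun.
  have cg : {for x, continuous (@gauss_fun R)} by move=> ?; exact: continuous_gauss_fun.
  have [d e] := @continuous_FTC1 R gauss_fun (BLeft (0 : R)) x (x + 1) xu ig ax cg.
  have := @derivable_pt_lim_derive1 _ _ d.
  by rewrite e /gauss_fun -RexpE expr2.
- move=> x /RleP x0; split.
    by apply/RleP; exact: gauss_integral_proof.integral0_gauss_ge0.
  apply/RleP; rewrite /gauss_integral_proof.integral0_gauss.
  apply: (@le_trans _ _ (\int[lebesgue_measure]_(t in `[(0 : R), x]) (cst (1 : R) t))).
    apply: le_Rintegral => //.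
    + apply: continuous_compact_integrable => //; first exact: segment_compact.
      by apply: continuous_subspaceT; exact: continuous_gauss_fun.
    + apply: continuous_compact_integrable => //; first exact: segment_compact.
      by apply: continuous_subspaceT; exact: cst_continuous.
    + by move=> t _; exact: gauss_fun_le1.
  rewrite Rintegral_cst //.
  have := @lebesgue_measure_itv R `[(0 : R), x]%R; rewrite /= => ->; rewrite lte_fin.
  by case: ifP => _; rewrite /= ?mulr0 // subr0 mul1r.
- move=> e /RltP e0.
  have := proj1 (cvgrPdist_lt _ _) (gauss_integral_proof.cvg_integral0_gauss_sqr (R:=R)) e e0.
  case=> M [_ HM]; exists M => x /RltP xM; apply/RltP.
  have R4E : (4%:R : R) = 4%coqR by rewrite -INRE /=; lra.
  by move: (HM x xM); rewrite -R4E -RpiE RabsE distrC expr2.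
Qed.

End GaussianIntegral.

From Coquelicot Require Import Coquelicot.
Open Scope R_scope.

(* This is [is_imp_int] phrased with Coquelicot's [RInt],
   which comes with a linear calculus. *)
Definition is_RInt_R (f : R -> R) (l : R) : Prop :=
  (forall a b, ex_RInt f a b) /\
  forall eps, 0 < eps -> exists M, forall a b, a <= -M -> M <= b ->
    Rabs (RInt f a b - l) < eps.

Lemma is_RInt_R_is_imp_int f l : is_RInt_R f l -> is_imp_int f l.
Proof.
intros [Hex H] eps He. destruct (H eps He) as [M HM].
exists M. intros a b Ha Hb.
exists (ex_RInt_Reals_0 f a b (Hex a b)).
rewrite <- RInt_Reals. now apply HM.
Qed.

Lemma is_imp_int_unique f l1 l2 : is_imp_int f l1 -> is_imp_int f l2 -> l1 = l2.
Proof.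
intros H1 H2. destruct (Req_dec l1 l2) as [E|NE]; [exact E|exfalso].
set (eps := Rabs (l1 - l2) / 2).
assert (He : 0 < eps) by (unfold eps; pose proof (Rabs_pos_lt (l1 - l2)); lra).
destruct (H1 eps He) as [M1 HM1]. destruct (H2 eps He) as [M2 HM2].
set (M := Rmax M1 M2). pose proof (Rmax_l M1 M2). pose proof (Rmax_r M1 M2).
destruct (HM1 (- M) M ltac:(unfold M; lra) ltac:(unfold M; lra)) as [p1 A1].
destruct (HM2 (- M) M ltac:(unfold M; lra) ltac:(unfold M; lra)) as [p2 A2].
rewrite (RiemannInt_P5 p1 p2) in A1.
assert (Rabs (l1 - l2) <= Rabs (RiemannInt p2 - l2) + Rabs (RiemannInt p2 - l1)).
{ replace (l1 - l2) with ((RiemannInt p2 - l2) - (RiemannInt p2 - l1)) by ring.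
  eapply Rle_trans; [apply Rabs_triang|]. rewrite Rabs_Ropp. lra. }
unfold eps in *. lra.
Qed.

Lemma Eg_eq F l : is_RInt_R (fun g => gauss_density g * F g) l -> Eg F = l.
Proof.
intros H. apply is_RInt_R_is_imp_int in H.
unfold Eg, imp_int. apply (is_imp_int_unique _ _ _ (epsilon_spec _ _ (ex_intro _ l H)) H).
Qed.

Lemma is_RInt_R_ext f g l : (forall x, f x = g x) -> is_RInt_R f l -> is_RInt_R g l.
Proof. intros E H. replace g with f; [exact H|]. apply functional_extensionality, E. Qed.

Lemma is_RInt_R_scal f l c : is_RInt_R f l -> is_RInt_R (fun x => c * f x) (c * l).
Proof.
intros [Hex H]. split; [intros a b; apply (ex_RInt_scal f a b c (Hex a b))|].
intros eps He.
assert (Hc : 0 < Rabs c + 1) by (pose proof (Rabs_pos c); lra).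
destruct (H (eps / (Rabs c + 1))) as [M HM]; [apply Rdiv_lt_0_compat; lra|].
exists M. intros a b Ha Hb. specialize (HM a b Ha Hb).
assert (E : RInt (fun x => c * f x) a b = c * RInt f a b) by exact (RInt_scal f a b c (Hex a b)).
rewrite E. replace (c * RInt f a b - c * l) with (c * (RInt f a b - l)) by ring.
rewrite Rabs_mult. pose proof (Rabs_pos c). pose proof (Rabs_pos (RInt f a b - l)).
apply Rle_lt_trans with ((Rabs c + 1) * Rabs (RInt f a b - l)); [nra|].
apply (Rmult_lt_compat_l (Rabs c + 1)) in HM; [|lra].
unfold Rdiv in HM. rewrite <- Rmult_assoc, Rinv_r_simpl_m in HM by lra. exact HM.
Qed.

Lemma is_RInt_R_plus f g l1 l2 :
  is_RInt_R f l1 -> is_RInt_R g l2 -> is_RInt_R (fun x => f x + g x) (l1 + l2).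
Proof.
intros [Hex1 H1] [Hex2 H2].
split; [intros a b; apply (ex_RInt_plus f g a b (Hex1 a b) (Hex2 a b))|].
intros eps He.
destruct (H1 (eps / 2)) as [M1 HM1]; [lra|]. destruct (H2 (eps / 2)) as [M2 HM2]; [lra|].
exists (Rmax M1 M2). intros a b Ha Hb. pose proof (Rmax_l M1 M2). pose proof (Rmax_r M1 M2).
assert (E : RInt (fun x => f x + g x) a b = RInt f a b + RInt g a b)
  by exact (RInt_plus f g a b (Hex1 a b) (Hex2 a b)).
rewrite E.
specialize (HM1 a b ltac:(lra) ltac:(lra)). specialize (HM2 a b ltac:(lra) ltac:(lra)).
replace (RInt f a b + RInt g a b - (l1 + l2)) with ((RInt f a b - l1) + (RInt g a b - l2)) by ring.
eapply Rle_lt_trans; [apply Rabs_triang|]. lra.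
Qed.

Lemma RInt_comp_affine (f : R -> R) u v a b : u <> 0 -> ex_RInt f (u * a + v) (u * b + v) ->
  ex_RInt (fun y => f (u * y + v)) a b /\
  RInt (fun y => f (u * y + v)) a b = / u * RInt f (u * a + v) (u * b + v).
Proof.
intros Hu H.
assert (Hl : ex_RInt (fun y => u * f (u * y + v)) a b) by exact (ex_RInt_comp_lin f u v a b H).
assert (El : RInt (fun y => u * f (u * y + v)) a b = RInt f (u * a + v) (u * b + v))
  by exact (RInt_comp_lin f u v a b H).
assert (Ex : ex_RInt (fun y => f (u * y + v)) a b).
{ apply (ex_RInt_ext (fun y => / u * (u * f (u * y + v)))).
  - intros x _. change (@eq R (/ u * (u * f (u * x + v))) (f (u * x + v))). field. exact Hu.
  - exact (ex_RInt_scal _ a b (/ u) Hl). }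
split; [exact Ex|].
rewrite <- El.
assert (Es : RInt (fun y => / u * (u * f (u * y + v))) a b = / u * RInt (fun y => u * f (u * y + v)) a b)
  by exact (RInt_scal _ a b (/ u) Hl).
rewrite <- Es. apply RInt_ext. intros x _.
change (@eq R (f (u * x + v)) (/ u * (u * f (u * x + v)))). field. exact Hu.
Qed.

Lemma is_RInt_R_comp_affine f l u v : 0 < u -> is_RInt_R f l -> is_RInt_R (fun x => f (u * x + v)) (l / u).
Proof.
intros Hu [Hex H].
split; [intros a b; apply (RInt_comp_affine f u v a b ltac:(lra) (Hex _ _))|].
intros eps He. destruct (H (eps * u)) as [M HM]; [nra|].
exists ((Rabs M + Rabs v) / u). intros a b Ha Hb.
rewrite (proj2 (RInt_comp_affine f u v a b ltac:(lra) (Hex _ _))).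
pose proof (Rle_abs M). pose proof (Rle_abs v). pose proof (Rle_abs (- v)). rewrite Rabs_Ropp in *.
assert (A : u * a + v <= - M).
{ apply (Rmult_le_compat_l u) in Ha; [|lra].
  replace (u * - ((Rabs M + Rabs v) / u)) with (- (Rabs M + Rabs v)) in Ha by (field; lra). lra. }
assert (B : M <= u * b + v).
{ apply (Rmult_le_compat_l u) in Hb; [|lra].
  replace (u * ((Rabs M + Rabs v) / u)) with (Rabs M + Rabs v) in Hb by (field; lra). lra. }
specialize (HM _ _ A B).
replace (/ u * RInt f (u * a + v) (u * b + v) - l / u) with (/ u * (RInt f (u * a + v) (u * b + v) - l))
  by (field; lra).
rewrite Rabs_mult, Rabs_right by (left; apply Rinv_0_lt_compat; lra).
apply (Rmult_lt_reg_l u); [lra|]. rewrite <- Rmult_assoc, Rinv_r by lra. lra.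
Qed.

Lemma is_RInt_R_antiderivative (f G : R -> R) :
  (forall x, continuous f x) -> (forall x, is_derive G x (f x)) ->
  (forall eps, 0 < eps -> exists M, forall y, M <= Rabs y -> Rabs (G y) < eps) ->
  is_RInt_R f 0.
Proof.
intros Hc Hd Ht.
split; [intros a b; apply (ex_RInt_continuous (V:=R_CompleteNormedModule)); auto|].
intros eps He. destruct (Ht (eps / 2)) as [M HM]; [lra|].
exists (Rabs M). intros a b Ha Hb.
assert (E : RInt f a b = G b - G a).
{ apply (is_RInt_unique (V:=R_CompleteNormedModule)).
  apply (is_RInt_derive (V:=R_CompleteNormedModule) G f a b); intros; auto. }
rewrite E. pose proof (Rle_abs M). pose proof (Rabs_pos M).
assert (M <= Rabs a) by (rewrite Rabs_left1; lra).
assert (M <= Rabs b) by (rewrite Rabs_right; lra).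
pose proof (HM a ltac:(lra)). pose proof (HM b ltac:(lra)).
replace (G b - G a - 0) with (G b + - G a) by ring.
eapply Rle_lt_trans; [apply Rabs_triang|]. rewrite Rabs_Ropp. lra.
Qed.

Definition gauss0 (t : R) : R := exp (- (t * t)).

Lemma gauss0_continuous x : continuous gauss0 x.
Proof. apply (ex_derive_continuous (V:=R_NormedModule)). unfold gauss0. auto_derive. auto. Qed.

Lemma ex_RInt_gauss0 a b : ex_RInt gauss0 a b.
Proof. apply (ex_RInt_continuous (V:=R_CompleteNormedModule)). intros; apply gauss0_continuous. Qed.

Lemma gauss0_bounds t : 0 < gauss0 t <= 1.
Proof.
unfold gauss0. split; [apply exp_pos|]. rewrite <- exp_0.
destruct (Req_dec t 0) as [->|Ht]; [right; f_equal; ring|].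
left; apply exp_increasing. pose proof (Rsqr_pos_lt t Ht). unfold Rsqr in *. lra.
Qed.

Lemma RInt_gauss0_bounds x : 0 <= x -> 0 <= RInt gauss0 0 x <= x.
Proof.
intros Hx. split.
- replace 0 with (RInt (fun _ => 0) 0 x) at 1.
  + apply RInt_le; auto using ex_RInt_gauss0, ex_RInt_const.
    intros t _; left; apply gauss0_bounds.
  + rewrite RInt_const. change (@eq R ((x - 0) * 0) 0). ring.
- replace x with (RInt (fun _ => 1) 0 x) at 2.
  + apply RInt_le; auto using ex_RInt_gauss0, ex_RInt_const.
    intros t _; apply gauss0_bounds.
  + rewrite RInt_const. change (@eq R ((x - 0) * 1) x). ring.
Qed.

(* [(int_0^x exp (- t^2) dt)^2 -> PI / 4]: on [x > 0] the Riemann integral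
   coincides with MathComp's antiderivative, since their difference has zero
   derivative and is [O(x)] near 0. *)
Lemma RInt_gauss0_sqr_limit : forall e, 0 < e -> exists M, forall x, M < x ->
  Rabs (RInt gauss0 0 x * RInt gauss0 0 x - PI / 4) < e.
Proof.
destruct GaussianIntegral.gauss_antiderivative as [F [HD [HB HL]]].
set (D := fun x => F x - RInt gauss0 0 x).
assert (HdD : forall x, 0 < x -> is_derive D x 0).
{ intros x Hx. apply is_derive_Reals.
  replace 0 with (exp (- (x * x)) - gauss0 x) by (unfold gauss0; ring).
  apply derivable_pt_lim_minus; [apply HD, Hx|].
  apply is_derive_Reals, (is_derive_RInt (V:=R_NormedModule) gauss0 (RInt gauss0 0) 0 x).
  - apply filter_forall. intros; apply (RInt_correct (V:=R_CompleteNormedModule)), ex_RInt_gauss0.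
  - apply gauss0_continuous. }
assert (Hconst : forall x y, 0 < y -> y < x -> D y = D x).
{ intros x y Hy Hyx. apply (eq_is_derive D y x); [|exact Hyx]. intros t Ht. apply HdD. lra. }
assert (Hsmall : forall x, 0 < x -> Rabs (D x) <= 2 * x).
{ intros x Hx. unfold D. destruct (HB x ltac:(lra)). destruct (RInt_gauss0_bounds x ltac:(lra)).
  apply Rabs_le. lra. }
assert (HFD : forall x, 0 < x -> D x = 0).
{ intros x Hx. destruct (Req_dec (D x) 0) as [E|E]; [exact E|exfalso].
  pose proof (Rabs_pos_lt _ E) as HDx.
  set (y := Rmin (x / 2) (Rabs (D x) / 4)).
  assert (Hy : 0 < y) by (unfold y; apply Rmin_pos; lra).
  pose proof (Rmin_l (x / 2) (Rabs (D x) / 4)). pose proof (Rmin_r (x / 2) (Rabs (D x) / 4)).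
  specialize (Hsmall y Hy). rewrite (Hconst x y Hy ltac:(unfold y in *; lra)) in Hsmall.
  unfold y in *. lra. }
intros e He. destruct (HL e He) as [M HM]. exists (Rmax M 0). intros x Hx.
pose proof (Rmax_l M 0). pose proof (Rmax_r M 0).
specialize (HFD x ltac:(lra)). unfold D in HFD.
replace (RInt gauss0 0 x) with (F x) by lra. apply HM. lra.
Qed.

Lemma RInt_gauss0_half_limit : forall e, 0 < e -> exists M, 0 <= M /\ forall x, M <= x ->
  Rabs (RInt gauss0 0 x - sqrt PI / 2) < e.
Proof.
intros e He.
set (s := sqrt PI / 2).
assert (Hs : 0 < s) by (unfold s; pose proof (sqrt_lt_R0 PI PI_RGT_0); lra).
assert (Hs2 : s * s = PI / 4).
{ unfold s. replace (sqrt PI / 2 * (sqrt PI / 2)) with (sqrt PI * sqrt PI / 4) by field.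
  rewrite sqrt_sqrt; [reflexivity|left; apply PI_RGT_0]. }
destruct (RInt_gauss0_sqr_limit (e * s)) as [M HM]; [nra|].
exists (Rmax M 0 + 1). split; [pose proof (Rmax_r M 0); lra|].
intros x Hx. pose proof (Rmax_l M 0). pose proof (Rmax_r M 0).
specialize (HM x ltac:(lra)). destruct (RInt_gauss0_bounds x ltac:(lra)) as [Hp _].
set (I := RInt gauss0 0 x) in *. fold s.
rewrite <- Hs2 in HM. replace (I * I - s * s) with ((I - s) * (I + s)) in HM by ring.
rewrite Rabs_mult, (Rabs_right (I + s)) in HM by lra.
assert (Rabs (I - s) * s <= Rabs (I - s) * (I + s)) by (apply Rmult_le_compat_l; [apply Rabs_pos|lra]).
apply (Rmult_lt_reg_r s); [exact Hs|]. lra.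
Qed.

(* The Gaussian integral [int_R exp (- t^2) dt = sqrt PI], using the
   symmetry of the integrand to reduce to the half line. *)
Lemma is_RInt_R_gauss0 : is_RInt_R gauss0 (sqrt PI).
Proof.
split; [apply ex_RInt_gauss0|].
assert (Heven : forall a, RInt gauss0 a 0 = RInt gauss0 0 (- a)).
{ intros a.
  destruct (RInt_comp_affine gauss0 (-1) 0 0 (- a) ltac:(lra) (ex_RInt_gauss0 _ _)) as [_ E].
  replace (-1 * - a + 0) with a in E by ring. replace (-1 * 0 + 0) with 0 in E by ring.
  rewrite (RInt_ext _ gauss0) in E by (intros; unfold gauss0; f_equal; ring).
  rewrite E, <- (opp_RInt_swap (V:=R_CompleteNormedModule)) by apply ex_RInt_gauss0.
  change (- RInt gauss0 0 a = / -1 * RInt gauss0 0 a). field. }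
intros eps He.
destruct (RInt_gauss0_half_limit (eps / 2)) as [M [HM0 HM]]; [lra|].
exists M. intros a b Ha Hb.
rewrite <- (RInt_Chasles (V:=R_CompleteNormedModule) gauss0 a 0 b) by apply ex_RInt_gauss0.
change (plus (RInt gauss0 a 0) (RInt gauss0 0 b)) with (RInt gauss0 a 0 + RInt gauss0 0 b).
rewrite Heven. pose proof (HM (- a) ltac:(lra)). pose proof (HM b Hb).
replace (RInt gauss0 0 (- a) + RInt gauss0 0 b - sqrt PI) with
  ((RInt gauss0 0 (- a) - sqrt PI / 2) + (RInt gauss0 0 b - sqrt PI / 2)) by field.
eapply Rle_lt_trans; [apply Rabs_triang|]. lra.
Qed.

Lemma sqrt_2PI_pos : 0 < sqrt (2 * PI).
Proof. apply sqrt_lt_R0. pose proof PI_RGT_0. lra. Qed.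

Lemma gauss_density_pos y : 0 < gauss_density y.
Proof. apply Rdiv_lt_0_compat; [apply exp_pos|apply sqrt_2PI_pos]. Qed.

Lemma gauss_density_continuous x : continuous gauss_density x.
Proof. apply (ex_derive_continuous (V:=R_NormedModule)). unfold gauss_density. auto_derive. auto. Qed.

Lemma gauss_density_derive x : is_derive gauss_density x (- x * gauss_density x).
Proof.
unfold gauss_density. auto_derive; auto. pose proof sqrt_2PI_pos.
change RinvImpl.Rinv with Rinv. unfold Rdiv.
set (S := sqrt _) in *. set (E := exp _). clearbody E. field. lra.
Qed.

(* The key Gaussian integral: for [p > 0],
   [E exp (- (p - 1) g^2 / 2 + r g) = exp (r^2 / (2 p)) / sqrt p],
   obtained from [is_RInt_R_gauss0] by completing the square. *)
Lemma is_RInt_R_gauss_exp_quadratic p r : 0 < p ->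
  is_RInt_R (fun x => gauss_density x * exp (- (p - 1) / 2 * x ^ 2 + r * x))
      (exp (r ^ 2 / (2 * p)) / sqrt p).
Proof.
intros Hp.
set (sp := sqrt p). assert (Hsp : 0 < sp) by (apply sqrt_lt_R0, Hp).
assert (Esp : sp * sp = p) by (apply sqrt_sqrt; lra).
set (s2 := sqrt 2). assert (Hs2 : 0 < s2) by (apply sqrt_lt_R0; lra).
assert (Es2 : s2 * s2 = 2) by (apply sqrt_sqrt; lra).
set (sP := sqrt PI). assert (HsP : 0 < sP) by (apply sqrt_lt_R0, PI_RGT_0).
assert (E2P : sqrt (2 * PI) = s2 * sP) by (apply sqrt_mult; [lra|left; apply PI_RGT_0]).
set (u := sp / s2). set (v := - r / (sp * s2)).
assert (Hu : 0 < u) by (unfold u; apply Rdiv_lt_0_compat; lra).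
set (c := exp (r ^ 2 / (2 * p)) / sqrt (2 * PI)).
pose proof (is_RInt_R_scal _ _ c (is_RInt_R_comp_affine gauss0 (sqrt PI) u v Hu is_RInt_R_gauss0)) as H.
replace (exp (r ^ 2 / (2 * p)) / sp) with (c * (sqrt PI / u))
  by (unfold c, u; rewrite E2P; fold sP sp; field; lra).
refine (is_RInt_R_ext _ _ _ _ H). intros x. unfold c, gauss_density, gauss0.
assert (Esq : (u * x + v) * (u * x + v) = (p * x - r) ^ 2 / (2 * p)).
{ unfold u, v. transitivity ((p * x - r) ^ 2 / ((sp * sp) * (s2 * s2))).
  - rewrite <- Esp. field. lra.
  - rewrite Esp, Es2. field. lra. }
rewrite Esq. rewrite E2P.
replace (exp (- (x * x) / 2) / (s2 * sP) * exp (- (p - 1) / 2 * x ^ 2 + r * x)) with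
  (exp (- (x * x) / 2 + (- (p - 1) / 2 * x ^ 2 + r * x)) / (s2 * sP)) by (rewrite exp_plus; field; lra).
replace (exp (r ^ 2 / (2 * p)) / (s2 * sP) * exp (- ((p * x - r) ^ 2 / (2 * p)))) with
  (exp (r ^ 2 / (2 * p) + - ((p * x - r) ^ 2 / (2 * p))) / (s2 * sP)) by (rewrite exp_plus; field; lra).
f_equal. f_equal. field. lra.
Qed.

Lemma is_RInt_R_gauss_mass : is_RInt_R gauss_density 1.
Proof.
pose proof (is_RInt_R_gauss_exp_quadratic 1 0 ltac:(lra)) as H.
replace (exp (0 ^ 2 / (2 * 1)) / sqrt 1) with 1 in H
  by (rewrite sqrt_1; replace (0 ^ 2 / (2 * 1)) with 0 by field; rewrite exp_0; field).
refine (is_RInt_R_ext _ _ _ _ H). intros x.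
replace (- (1 - 1) / 2 * x ^ 2 + 0 * x) with 0 by field. rewrite exp_0. ring.
Qed.

Lemma gauss_density_tail eps : 0 < eps -> exists M, forall y, M <= Rabs y ->
  (1 + Rabs y) * gauss_density y < eps.
Proof.
intros He. exists (4 / eps + 1). intros y Hy.
assert (H4 : 0 < 4 / eps) by (apply Rdiv_lt_0_compat; lra).
assert (Hk : 4 < eps * Rabs y).
{ apply (Rmult_lt_compat_l eps (4 / eps) (Rabs y)) in He as H; [|lra].
  field_simplify in H; lra. }
assert (Hyy : Rabs y * Rabs y = y * y) by (rewrite <- Rabs_mult; apply Rabs_right; nra).
assert (Hex : 1 + y * y / 2 < exp (y * y / 2)) by (apply exp_ineq1; nra).
assert (Hg : gauss_density y * (1 + y * y / 2) < 1).
{ unfold gauss_density. replace (- (y * y) / 2) with (- (y * y / 2)) by field.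
  rewrite exp_Ropp. pose proof (exp_pos (y * y / 2)).
  assert (1 < sqrt (2 * PI)).
  { rewrite <- sqrt_1. apply sqrt_lt_1; pose proof PI_RGT_0; pose proof PI2_3_2; lra. }
  apply (Rmult_lt_reg_r (sqrt (2 * PI) * exp (y * y / 2))); [nra|].
  field_simplify; [nra|lra]. }
pose proof (gauss_density_pos y). nra.
Qed.

Lemma is_RInt_R_gauss_mean : is_RInt_R (fun x => gauss_density x * x) 0.
Proof.
apply (is_RInt_R_antiderivative _ (fun x => - gauss_density x)).
- intros x. apply (continuous_mult (K:=R_AbsRing)); [apply gauss_density_continuous|].
  apply (continuous_id (U:=R_UniformSpace)).
- intros x. pose proof (is_derive_opp (K:=R_AbsRing) (V:=R_NormedModule) _ _ _ (gauss_density_derive x)) as H.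
  replace (gauss_density x * x) with (opp (- x * gauss_density x)) by (unfold opp; simpl; ring).
  exact H.
- intros eps He. destruct (gauss_density_tail eps He) as [M HM]. exists M. intros y Hy.
  specialize (HM y Hy). pose proof (gauss_density_pos y). pose proof (Rabs_pos y).
  rewrite Rabs_Ropp, Rabs_right by lra. nra.
Qed.

Lemma is_RInt_R_gauss_second_moment : is_RInt_R (fun x => gauss_density x * x ^ 2) 1.
Proof.
assert (H0 : is_RInt_R (fun x => gauss_density x * x ^ 2 - gauss_density x) 0).
{ apply (is_RInt_R_antiderivative _ (fun y => - (y * gauss_density y))).
  - intros x. apply (ex_derive_continuous (V:=R_NormedModule)).
    unfold gauss_density. auto_derive. auto.
  - intros x. apply is_derive_Reals.
    replace (gauss_density x * x ^ 2 - gauss_density x) with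
      (- (1 * gauss_density x + x * (- x * gauss_density x))) by ring.
    apply (derivable_pt_lim_opp (mult_fct id gauss_density)), derivable_pt_lim_mult.
    + apply derivable_pt_lim_id.
    + apply is_derive_Reals, gauss_density_derive.
  - intros eps He. destruct (gauss_density_tail eps He) as [M HM]. exists M. intros y Hy.
    specialize (HM y Hy). pose proof (gauss_density_pos y).
    rewrite Rabs_Ropp, Rabs_mult, (Rabs_right (gauss_density y)) by lra. nra. }
pose proof (is_RInt_R_plus _ _ _ _ H0 is_RInt_R_gauss_mass) as H.
replace (0 + 1) with 1 in H by ring.
refine (is_RInt_R_ext _ _ _ _ H). intros x; ring.
Qed.

Fixpoint rprod (n : nat) (f : nat -> R) : R :=
  match n with O => 1 | S n' => rprod n' f * f n' end.

Lemma rsum_ext n f g : (forall i, (i < n)%nat -> f i = g i) -> rsum n f = rsum n g.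
Proof.
induction n; intros H; simpl; [reflexivity|].
rewrite IHn, H; [reflexivity | lia | intros; apply H; lia].
Qed.

Lemma rprod_ext n f g : (forall i, (i < n)%nat -> f i = g i) -> rprod n f = rprod n g.
Proof.
induction n; intros H; simpl; [reflexivity|].
rewrite IHn, H; [reflexivity | lia | intros; apply H; lia].
Qed.

Lemma exp_rsum n f : exp (rsum n f) = rprod n (fun i => exp (f i)).
Proof. induction n; simpl; [apply exp_0|]. rewrite exp_plus, IHn. reflexivity. Qed.

Lemma rsum_plus n f g : rsum n (fun i => f i + g i) = rsum n f + rsum n g.
Proof. induction n; simpl; [ring|]. rewrite IHn; ring. Qed.

Lemma rsum_scal n c f : rsum n (fun i => c * f i) = c * rsum n f.
Proof. induction n; simpl; [ring|]. rewrite IHn; ring. Qed.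

Lemma rsum_swap n k (F : nat -> nat -> R) :
  rsum n (fun i => rsum k (fun a => F a i)) = rsum k (fun a => rsum n (fun i => F a i)).
Proof.
induction n; simpl.
- induction k; simpl; [reflexivity|]. rewrite <- IHk; ring.
- rewrite IHn, <- rsum_plus. reflexivity.
Qed.

Lemma rsum_const n c : rsum n (fun _ => c) = INR n * c.
Proof. induction n; simpl; [ring|]. rewrite IHn. destruct n; simpl; ring. Qed.

Lemma Eg_ext F G : (forall z, F z = G z) -> Eg F = Eg G.
Proof. intros H. f_equal. apply functional_extensionality, H. Qed.

Lemma Evec_ext n F G : (forall z, F z = G z) -> Evec n F = Evec n G.
Proof. intros H. f_equal. apply functional_extensionality, H. Qed.

Lemma Eg_const c : Eg (fun _ => c) = c.
Proof.
apply Eg_eq. pose proof (is_RInt_R_scal _ _ c is_RInt_R_gauss_mass) as H.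
rewrite Rmult_1_r in H. refine (is_RInt_R_ext _ _ _ _ H). intros x; ring.
Qed.

Lemma Evec_const n c : Evec n (fun _ => c) = c.
Proof. induction n; simpl; [reflexivity|]. rewrite IHn. apply Eg_const. Qed.

Lemma Emat_const N r c : Emat N r (fun _ => c) = c.
Proof. induction r; simpl; [reflexivity|]. rewrite IHr. apply Evec_const. Qed.

Lemma Evec_prod n (phi : nat -> R -> R) (e : nat -> R) :
  (forall i, (i < n)%nat -> is_RInt_R (fun x => gauss_density x * phi i x) (e i)) ->
  forall c, Evec n (fun z => c * rprod n (fun i => phi i (z i))) = c * rprod n e.
Proof.
induction n as [|n IH]; intros He c; [reflexivity|].
cbn [Evec]. transitivity (Eg (fun g => (c * rprod n e) * phi n g)).
- apply Eg_ext. intros g. transitivity ((c * phi n g) * rprod n e); [|ring].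
  rewrite <- (IH (fun i Hi => He i ltac:(lia)) (c * phi n g)).
  apply Evec_ext. intros z. cbn [rprod]. rewrite Nat.eqb_refl.
  rewrite (rprod_ext n _ (fun i => phi i (z i))); [ring|].
  intros i Hi. replace (Nat.eqb i n) with false by (symmetry; apply Nat.eqb_neq; lia). reflexivity.
- apply Eg_eq. pose proof (is_RInt_R_scal _ _ (c * rprod n e) (He n ltac:(lia))) as H.
  cbn [rprod]. rewrite <- Rmult_assoc. refine (is_RInt_R_ext _ _ _ _ H). intros x; ring.
Qed.

Lemma Evec_sum n (psi : nat -> R -> R) (e : nat -> R) :
  (forall i, (i < n)%nat -> is_RInt_R (fun x => gauss_density x * psi i x) (e i)) ->
  forall c, Evec n (fun z => c + rsum n (fun i => psi i (z i))) = c + rsum n e.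
Proof.
induction n as [|n IH]; intros He c; [reflexivity|].
cbn [Evec]. transitivity (Eg (fun g => (c + rsum n e) + psi n g)).
- apply Eg_ext. intros g. transitivity ((c + psi n g) + rsum n e); [|ring].
  rewrite <- (IH (fun i Hi => He i ltac:(lia)) (c + psi n g)).
  apply Evec_ext. intros z. cbn [rsum]. rewrite Nat.eqb_refl.
  rewrite (rsum_ext n _ (fun i => psi i (z i))); [ring|].
  intros i Hi. replace (Nat.eqb i n) with false by (symmetry; apply Nat.eqb_neq; lia). reflexivity.
- apply Eg_eq.
  pose proof (is_RInt_R_plus _ _ _ _ (is_RInt_R_scal _ _ (c + rsum n e) is_RInt_R_gauss_mass) (He n ltac:(lia))) as H.
  rewrite Rmult_1_r in H. cbn [rsum]. rewrite <- Rplus_assoc.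
  refine (is_RInt_R_ext _ _ _ _ H). intros x; ring.
Qed.

Section OrderParameter.
Variables (K : nat) (q m : nat -> R).
Hypothesis q_step : forall a, (1 <= a <= K)%nat -> q (a - 1)%nat <= q a.

(* [x_tail j = sum_{a > K - j} m_a (q_a - q_{a-1})], the integral of the
   order parameter over [[q_{K-j}, Q]]. *)
Definition x_tail (j : nat) : R :=
  rsum j (fun k => m (K - k)%nat * (q (K - k)%nat - q (K - k - 1)%nat)).

Lemma x_tail_S j : x_tail (S j) = x_tail j + m (K - j)%nat * (q (K - j)%nat - q (K - j - 1)%nat).
Proof. reflexivity. Qed.

Lemma q_mono i j : (i <= j <= K)%nat -> q i <= q j.
Proof.
induction j as [|j IH]; intros Hij.
- replace i with 0%nat by lia. lra.
- destruct (Nat.eq_dec i (S j)) as [->|ne]; [lra|].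
  apply Rle_trans with (q j); [apply IH; lia|].
  pose proof (q_step (S j) ltac:(lia)) as H. replace (S j - 1)%nat with j in H by lia. exact H.
Qed.

Lemma srch_lt_spec qv fuel : forall c b, (c <= b <= c + fuel)%nat ->
  (forall i, (c <= i < b)%nat -> ~ qv < q i) -> ((b < c + fuel)%nat -> qv < q b) ->
  srch_lt q qv c fuel = b.
Proof.
induction fuel as [|fuel IH]; intros c b Hb Hi Hl; simpl; [lia|].
destruct (Rlt_dec qv (q c)) as [h|h]; destruct (Nat.eq_dec c b) as [->|ne]; try reflexivity.
- exfalso. apply (Hi c); [lia|exact h].
- exfalso. apply h, Hl. lia.
- apply IH; [lia| |]; intros; [apply Hi|apply Hl]; lia.
Qed.

Lemma xfun_on a qv : (1 <= a <= K)%nat -> q (a - 1)%nat < qv < q a -> xfun K q m qv = m a.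
Proof.
intros Ha Hv. unfold xfun. f_equal. apply srch_lt_spec; [lia| |intros _; lra].
intros i Hi Hlt. assert (q i <= q (a - 1)%nat) by (apply q_mono; lia). lra.
Qed.

Lemma is_RInt_xfun_tail j : (j <= K)%nat -> is_RInt (xfun K q m) (q (K - j)%nat) (q K) (x_tail j).
Proof.
induction j as [|j IH]; intros Hj.
- rewrite Nat.sub_0_r. apply (is_RInt_point (V:=R_NormedModule)).
- set (a := (K - j)%nat). rewrite x_tail_S. fold a.
  replace (K - S j)%nat with (a - 1)%nat by (unfold a; lia).
  assert (Ha : (1 <= a <= K)%nat) by (unfold a; lia).
  assert (Piece : is_RInt (xfun K q m) (q (a - 1)%nat) (q a) (m a * (q a - q (a - 1)%nat))).
  { pose proof (q_step a Ha) as Hle.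
    apply (is_RInt_ext (V:=R_NormedModule) (fun _ => m a)).
    - intros x Hx. rewrite Rmin_left, Rmax_right in Hx by exact Hle.
      symmetry; apply xfun_on; [exact Ha|lra].
    - replace (m a * (q a - q (a - 1)%nat)) with (scal (q a - q (a - 1)%nat) (m a))
        by (unfold scal; simpl; unfold mult; simpl; ring).
      apply (is_RInt_const (V:=R_NormedModule)). }
  replace (x_tail j + m a * (q a - q (a - 1)%nat)) with (plus (m a * (q a - q (a - 1)%nat)) (x_tail j))
    by (unfold plus; simpl; ring).
  apply (is_RInt_Chasles (V:=R_NormedModule)) with (q a); [exact Piece|apply IH; lia].
Qed.

Lemma x_tail_bound (alpha : R) : q 0%nat = 0 ->
  (forall qv, 0 <= qv <= q K ->
     forall pr : Riemann_integrable (xfun K q m) qv (q K), alpha * RiemannInt pr < 1) ->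
  forall j, (j <= K)%nat -> alpha * x_tail j < 1.
Proof.
intros H0 Hx j Hj.
pose proof (is_RInt_xfun_tail j Hj) as I.
set (pr := ex_RInt_Reals_0 _ _ _ (ex_intro _ _ I)).
replace (x_tail j) with (RiemannInt pr)
  by (unfold pr; rewrite <- RInt_Reals; apply (is_RInt_unique (V:=R_CompleteNormedModule)), I).
apply Hx. rewrite <- H0. split; apply q_mono; lia.
Qed.

End OrderParameter.

Definition quadratic (f : R -> R) (A C : R) : Prop := forall y, f y = A / 2 * y ^ 2 + C.

Lemma sqrt_sq x : 0 <= x -> sqrt x ^ 2 = x.
Proof. intros H. simpl. rewrite Rmult_1_r. apply sqrt_sqrt, H. Qed.

Lemma Reqb_true x y : x = y -> Reqb x y = true.
Proof. intros ->. unfold Reqb. destruct (Req_dec_T y y); [reflexivity|congruence]. Qed.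

Lemma Reqb_false x y : x <> y -> Reqb x y = false.
Proof. intros H. unfold Reqb. destruct (Req_dec_T x y); [congruence|reflexivity]. Qed.

Lemma gauss_exp_quadratic f A C ma s h :
  quadratic f A C -> ma <> 0 -> 0 < 1 - ma * A * s ^ 2 ->
  is_RInt_R (fun x => gauss_density x * exp (ma * f (h + s * x)))
    (exp (ma * (A / (1 - ma * A * s ^ 2) / 2 * h ^ 2 + (C - ln (sqrt (1 - ma * A * s ^ 2)) / ma)))).
Proof.
intros Hf Hm Hp.
set (p := 1 - ma * A * s ^ 2) in *. set (r := ma * A * h * s).
assert (Hsp : 0 < sqrt p) by (apply sqrt_lt_R0, Hp).
pose proof (is_RInt_R_scal _ _ (exp (ma * C + ma * A / 2 * h ^ 2))
  (is_RInt_R_gauss_exp_quadratic p r Hp)) as H.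
replace (exp (ma * (A / p / 2 * h ^ 2 + (C - ln (sqrt p) / ma)))) with
  (exp (ma * C + ma * A / 2 * h ^ 2) * (exp (r ^ 2 / (2 * p)) / sqrt p)).
- refine (is_RInt_R_ext _ _ _ _ H). intros x. rewrite Hf.
  rewrite <- Rmult_assoc, (Rmult_comm (exp _) (gauss_density x)), Rmult_assoc, <- exp_plus.
  do 2 f_equal. unfold p, r. field.
- replace (ma * (A / p / 2 * h ^ 2 + (C - ln (sqrt p) / ma))) with
    ((ma * C + ma * A / 2 * h ^ 2 + r ^ 2 / (2 * p)) - ln (sqrt p))
    by (unfold r, p; field; fold p; lra).
  unfold Rminus at 1. rewrite !exp_plus, exp_Ropp, exp_ln by exact Hsp.
  unfold Rdiv. ring.
Qed.

Lemma gauss_quadratic f A C s h :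
  quadratic f A C ->
  is_RInt_R (fun x => gauss_density x * f (h + s * x)) (A / 2 * h ^ 2 + (C + A / 2 * s ^ 2)).
Proof.
intros Hf.
pose proof (is_RInt_R_plus _ _ _ _ (is_RInt_R_scal _ _ (A / 2 * h ^ 2 + C) is_RInt_R_gauss_mass)
  (is_RInt_R_plus _ _ _ _ (is_RInt_R_scal _ _ (A * h * s) is_RInt_R_gauss_mean)
     (is_RInt_R_scal _ _ (A / 2 * s ^ 2) is_RInt_R_gauss_second_moment))) as H.
replace (A / 2 * h ^ 2 + (C + A / 2 * s ^ 2)) with
  ((A / 2 * h ^ 2 + C) * 1 + (A * h * s * 0 + A / 2 * s ^ 2 * 1)) by ring.
refine (is_RInt_R_ext _ _ _ _ H). intros x. rewrite Hf. field.
Qed.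

Section ParisiStep.
Variables (f : R -> R) (A C ma qa qv : R).
Hypothesis f_quadratic : quadratic f A C.
Hypothesis q_le : qv <= qa.
Hypothesis step_pos : 0 < 1 - ma * A * (qa - qv).

Let s := sqrt (qa - qv).
Let s_sq : s ^ 2 = qa - qv.
Proof. apply sqrt_sq. lra. Qed.

Lemma parisi_step_exp_integral h : ma <> 0 ->
  is_RInt_R (fun x => gauss_density x * exp (ma * f (h + s * x))) (exp (ma * parisi_step ma qa qv f h)).
Proof.
intros Hm. rewrite <- s_sq in step_pos.
pose proof (gauss_exp_quadratic f A C ma s h f_quadratic Hm step_pos) as H.
unfold parisi_step. rewrite Reqb_false by exact Hm. fold s.
rewrite (Eg_eq _ _ H), ln_exp, <- Rmult_assoc, Rinv_r, Rmult_1_l by exact Hm. exact H.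
Qed.

Lemma parisi_step_integral h :
  is_RInt_R (fun x => gauss_density x * f (h + s * x)) (parisi_step 0 qa qv f h).
Proof.
pose proof (gauss_quadratic f A C s h f_quadratic) as H.
unfold parisi_step. rewrite Reqb_true by reflexivity. fold s. rewrite (Eg_eq _ _ H). exact H.
Qed.

Lemma parisi_step_quadratic :
  exists C', quadratic (parisi_step ma qa qv f) (A / (1 - ma * A * (qa - qv))) C'.
Proof.
destruct (Req_dec ma 0) as [Hm|Hm].
- subst ma. exists (C + A / 2 * s ^ 2). intros h.
  pose proof (parisi_step_integral h) as H. pose proof (gauss_quadratic f A C s h f_quadratic) as H'.
  rewrite (is_imp_int_unique _ _ _ (is_RInt_R_is_imp_int _ _ H) (is_RInt_R_is_imp_int _ _ H')).
  replace (1 - 0 * A * (qa - qv)) with 1 by ring. field.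
- exists (C - ln (sqrt (1 - ma * A * s ^ 2)) / ma). intros h.
  pose proof (parisi_step_exp_integral h Hm) as H.
  rewrite <- s_sq in step_pos.
  pose proof (gauss_exp_quadratic f A C ma s h f_quadratic Hm step_pos) as H'.
  pose proof (is_imp_int_unique _ _ _ (is_RInt_R_is_imp_int _ _ H) (is_RInt_R_is_imp_int _ _ H')) as E.
  apply exp_inv, (Rmult_eq_reg_l ma) in E; [|exact Hm]. rewrite E, s_sq. reflexivity.
Qed.

End ParisiStep.

(* The curvature recursion [A_{j+1} = A_j / (1 - m_a A_j d_a)] solved by
   [A_j = alpha / (1 - alpha T_j)] with [T_{j+1} = T_j + m_a d_a]. *)
Lemma curvature_step alpha T ma d :
  alpha * T < 1 -> alpha * (T + ma * d) < 1 ->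
  0 < 1 - ma * (alpha / (1 - alpha * T)) * d /\
  alpha / (1 - alpha * T) / (1 - ma * (alpha / (1 - alpha * T)) * d) = alpha / (1 - alpha * (T + ma * d)).
Proof.
intros H1 H2.
assert (E : 1 - ma * (alpha / (1 - alpha * T)) * d = (1 - alpha * (T + ma * d)) / (1 - alpha * T))
  by (field; lra).
rewrite E. split; [apply Rdiv_lt_0_compat; lra|]. field. lra.
Qed.

Section ParisiSolution.
Variables (K : nat) (q m : nat -> R) (beta lam : R).
Hypothesis q_step : forall a, (1 <= a <= K)%nat -> q (a - 1)%nat <= q a.
Let alpha := beta ^ 2 * sigmaQ beta lam (q K) ^ 2.
Hypothesis tail_bound : forall j, (j <= K)%nat -> alpha * x_tail K q m j < 1.

Lemma fdown_step_positive j : (j < K)%nat ->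
  0 < 1 - m (K - j)%nat * (alpha / (1 - alpha * x_tail K q m j)) * (q (K - j)%nat - q (K - j - 1)%nat).
Proof.
intros Hj. pose proof (tail_bound (S j) Hj) as T2. rewrite x_tail_S in T2.
exact (proj1 (curvature_step _ _ _ _ (tail_bound j ltac:(lia)) T2)).
Qed.

Lemma fdown_quadratic j : (j <= K)%nat ->
  exists C, quadratic (fdown K q m beta lam j) (alpha / (1 - alpha * x_tail K q m j)) C.
Proof.
induction j as [|j IH]; intros Hj.
- exists 0. intros y. cbn [fdown x_tail rsum]. unfold alpha. field.
- destruct (IH ltac:(lia)) as [C HC].
  pose proof (tail_bound (S j) Hj) as T2. rewrite x_tail_S in T2.
  destruct (parisi_step_quadratic _ _ C (m (K - j)%nat) (q (K - j)%nat) (q (K - j - 1)%nat) HC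
    (q_step (K - j) ltac:(lia)) (fdown_step_positive j Hj)) as [C' HC'].
  exists C'. rewrite x_tail_S, <- (proj2 (curvature_step _ _ _ _ (tail_bound j ltac:(lia)) T2)).
  exact HC'.
Qed.

End ParisiSolution.

(* The cavity field [h^(a)_i = sum_{b <= a} sqrt (q_b - q_{b-1}) J^b_i]
   felt by spin [i] once the Gaussian fields of levels [1..a] are fixed. *)
Definition cavity_field (q : nat -> R) (a : nat) (Js : nat -> nat -> R) (i : nat) : R :=
  rsum a (fun b => sqrt (q (S b) - q b) * Js (S b) i).

Lemma cavity_field_update q a Js (g : nat -> R) i : (1 <= a)%nat ->
  cavity_field q a (fun b i => if Nat.eqb b a then g i else Js b i) i =
  cavity_field q (a - 1) Js i + sqrt (q a - q (a - 1)%nat) * g i.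
Proof.
intros Ha. destruct a as [|a]; [lia|]. rewrite Nat.sub_succ, Nat.sub_0_r.
unfold cavity_field. cbn [rsum]. rewrite Nat.eqb_refl. f_equal.
apply rsum_ext. intros b Hb. destruct (Nat.eqb_spec (S b) (S a)); [lia|reflexivity].
Qed.

Lemma Hint_at_0 N K q beta lam J Js z :
  Hint N K q beta lam 0 J Js z =
  rsum N (fun i => - ((1 - lam + beta ^ 2 * q K) - 1) / 2 * z i ^ 2 + (beta * cavity_field q K Js i) * z i).
Proof.
unfold Hint. cbv zeta.
replace (0 / (2 * INR N)) with 0 by (unfold Rdiv; ring). rewrite sqrt_0, Rminus_0_r, sqrt_1.
assert (E : rsum K (fun a => sqrt (q (S a) - q a) * rsum N (fun i => Js (S a) i * z i)) =
            rsum N (fun i => cavity_field q K Js i * z i)).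
{ transitivity (rsum K (fun a => rsum N (fun i => sqrt (q (S a) - q a) * (Js (S a) i * z i)))).
  - apply rsum_ext. intros a _. symmetry. apply rsum_scal.
  - rewrite <- rsum_swap. apply rsum_ext. intros i _. unfold cavity_field.
    rewrite Rmult_comm, <- rsum_scal. apply rsum_ext. intros b _. ring. }
rewrite E, rsum_plus.
rewrite (rsum_ext N (fun i => - ((1 - lam + beta ^ 2 * q K) - 1) / 2 * z i ^ 2)
  (fun i => (- ((1 - lam + beta ^ 2 * q K) - 1) / 2) * (z i * z i))) by (intros; ring).
rewrite (rsum_ext N (fun i => beta * cavity_field q K Js i * z i)
  (fun i => beta * (cavity_field q K Js i * z i))) by (intros; ring).
rewrite !rsum_scal. replace (0 * beta ^ 2 / (4 * INR N)) with 0 by (unfold Rdiv; ring).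
field.
Qed.

Lemma Ztilde_at_0 N K q m beta lam J Js : 0 < 1 - lam + beta ^ 2 * q K ->
  Ztilde N K q beta lam 0 J Js =
  exp (rsum N (fun i => ln (sigmaQ beta lam (q K)) + fdown K q m beta lam 0 (cavity_field q K Js i))).
Proof.
intros HP. set (P := 1 - lam + beta ^ 2 * q K) in *.
set (h := cavity_field q K Js).
unfold Ztilde.
rewrite (Evec_ext N _ (fun z => 1 * rprod N (fun i =>
   (fun i x => exp (- (P - 1) / 2 * x ^ 2 + (beta * h i) * x)) i (z i))))
  by (intros z; rewrite Hint_at_0, exp_rsum, Rmult_1_l; reflexivity).
rewrite (Evec_prod N (fun i x => exp (- (P - 1) / 2 * x ^ 2 + (beta * h i) * x))
  (fun i => exp ((beta * h i) ^ 2 / (2 * P)) / sqrt P))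
  by (intros i _; apply is_RInt_R_gauss_exp_quadratic, HP).
rewrite Rmult_1_l, exp_rsum. apply rprod_ext. intros i _. cbn [fdown].
assert (Hs : 0 < sqrt P) by (apply sqrt_lt_R0, HP).
assert (Hsig : 0 < sigmaQ beta lam (q K)) by (apply Rinv_0_lt_compat, Hs).
assert (E2 : sigmaQ beta lam (q K) ^ 2 = / P) by (unfold sigmaQ; fold P; rewrite pow_inv, sqrt_sq by lra; reflexivity).
rewrite exp_plus, exp_ln, E2 by exact Hsig. unfold sigmaQ. fold P.
replace ((beta * h i) ^ 2 / (2 * P)) with (beta ^ 2 / 2 * / P * h i ^ 2) by (field; lra).
unfold Rdiv. apply Rmult_comm.
Qed.

Definition level_average (N : nat) (ma : R) (Z : (nat -> R) -> R) : R :=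
  if Reqb ma 0 then exp (Evec N (fun g => ln (Z g)))
  else Rpower (Evec N (fun g => Rpower (Z g) ma)) (/ ma).

Lemma level_average_product N f A C ma qa qv L (h : nat -> R) :
  quadratic f A C -> qv <= qa -> 0 < 1 - ma * A * (qa - qv) ->
  level_average N ma (fun g => exp (rsum N (fun i => L + f (h i + sqrt (qa - qv) * g i)))) =
  exp (rsum N (fun i => L + parisi_step ma qa qv f (h i))).
Proof.
intros Hf Hq Hp. unfold level_average.
destruct (Req_dec ma 0) as [Hm|Hm].
- rewrite Reqb_true by exact Hm. subst ma. f_equal.
  rewrite (Evec_ext N _ (fun g => 0 + rsum N (fun i => (fun i x => L + f (h i + sqrt (qa - qv) * x)) i (g i))))
    by (intros g; rewrite ln_exp, Rplus_0_l; reflexivity).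
  rewrite (Evec_sum N (fun i x => L + f (h i + sqrt (qa - qv) * x))
    (fun i => L + parisi_step 0 qa qv f (h i))), Rplus_0_l; [reflexivity|].
  intros i _. pose proof (is_RInt_R_plus _ _ _ _ (is_RInt_R_scal _ _ L is_RInt_R_gauss_mass)
    (parisi_step_integral f A C qa qv Hf (h i))) as H.
  rewrite Rmult_1_r in H. refine (is_RInt_R_ext _ _ _ _ H). intros x; cbv beta; ring.
- rewrite Reqb_false by exact Hm.
  rewrite (Evec_ext N _ (fun g => 1 * rprod N (fun i =>
     (fun i x => exp (ma * (L + f (h i + sqrt (qa - qv) * x)))) i (g i))))
    by (intros g; unfold Rpower; rewrite ln_exp, <- rsum_scal, exp_rsum, Rmult_1_l;
        reflexivity).
  rewrite (Evec_prod N (fun i x => exp (ma * (L + f (h i + sqrt (qa - qv) * x))))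
     (fun i => exp (ma * (L + parisi_step ma qa qv f (h i))))).
  + unfold Rpower. rewrite Rmult_1_l, <- exp_rsum, ln_exp, rsum_scal. f_equal. field. exact Hm.
  + intros i _. pose proof (is_RInt_R_scal _ _ (exp (ma * L))
      (parisi_step_exp_integral f A C ma qa qv Hf Hq Hp (h i) Hm)) as H.
    rewrite <- exp_plus in H. replace (ma * L + ma * _) with (ma * (L + parisi_step ma qa qv f (h i))) in H by ring.
    refine (is_RInt_R_ext _ _ _ _ H). intros x. rewrite Rmult_plus_distr_l, exp_plus. ring.
Qed.

Section PartitionFunction.
Variables (N K : nat) (q m : nat -> R) (beta lam : R).
Hypothesis q_step : forall a, (1 <= a <= K)%nat -> q (a - 1)%nat <= q a.
Hypothesis tail_bound :
  forall j, (j <= K)%nat -> beta ^ 2 * sigmaQ beta lam (q K) ^ 2 * x_tail K q m j < 1.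
Hypothesis P_pos : 0 < 1 - lam + beta ^ 2 * q K.

(* [Z_{K-j} = prod_i sigma exp f(q_{K-j}, h^(K-j)_i)] at [t = 0]: each
   level average is one Parisi step, spin by spin. *)
Lemma Zlev_at_0 j : (j <= K)%nat -> forall J Js,
  Zlev N K q m beta lam 0 j J Js =
  exp (rsum N (fun i => ln (sigmaQ beta lam (q K)) +
                        fdown K q m beta lam j (cavity_field q (K - j) Js i))).
Proof.
induction j as [|j IH]; intros Hj J Js.
- rewrite Nat.sub_0_r. apply Ztilde_at_0, P_pos.
- set (a := (K - j)%nat). replace (K - S j)%nat with (a - 1)%nat by (unfold a; lia).
  change (Zlev N K q m beta lam 0 (S j) J Js) with (level_average N (m a)
    (fun g => Zlev N K q m beta lam 0 j J (fun b i => if Nat.eqb b a then g i else Js b i))).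
  rewrite (functional_extensionality _ (fun g => exp (rsum N (fun i =>
      ln (sigmaQ beta lam (q K)) + fdown K q m beta lam j
        (cavity_field q (a - 1) Js i + sqrt (q a - q (a - 1)%nat) * g i))))).
  + destruct (fdown_quadratic K q m beta lam q_step tail_bound j ltac:(lia)) as [C HC].
    exact (level_average_product N _ _ C _ _ _ _ _ HC (q_step a ltac:(unfold a; lia))
      (fdown_step_positive K q m beta lam tail_bound j Hj)).
  + intros g. rewrite IH by lia. fold a. do 3 f_equal. apply functional_extensionality. intros i.
    rewrite cavity_field_update by (unfold a; lia). reflexivity.
Qed.

End PartitionFunction.

(* [f(0, .)] is reached by the last Parisi step, on [[q_0, q_1] = [0, q_1]]. *)
Lemma parisi_f_at_0 K q m beta lam y : (1 <= K)%nat -> q 0%nat = 0 -> 0 <= q 1%nat ->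
  parisi_f K q m beta lam 0 y = fdown K q m beta lam K y.
Proof.
intros HK H0 H1. destruct K as [|K]; [lia|].
unfold parisi_f. replace (srch_le q 0 1 (S K - 1)) with 1%nat.
- replace (S K - 1)%nat with K by lia. cbn [fdown].
  replace (S K - K)%nat with 1%nat by lia. simpl (1 - 1)%nat. rewrite H0. reflexivity.
- rewrite Nat.sub_succ, Nat.sub_0_r.
  destruct K; simpl; [reflexivity|]. destruct (Rle_dec 0 (q 1%nat)); [reflexivity|contradiction].
Qed.

Theorem mainTheorem14 (beta lam : R) (K : nat) (q m : nat -> R) (N : nat) :
  0 < beta ->
  (1 <= K)%nat ->
  q 0%nat = 0 ->
  (forall a, (1 <= a <= K)%nat -> q (a - 1)%nat <= q a) ->
  0 <= m 1%nat ->
  (forall a, (1 <= a < K)%nat -> m a <= m (S a)) ->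
  m K <= 1 ->
  0 < 1 - lam + beta ^ 2 * q K ->
  (forall qv, 0 <= qv <= q K ->
     forall pr : Riemann_integrable (xfun K q m) qv (q K),
       beta ^ 2 * (sigmaQ beta lam (q K)) ^ 2 * RiemannInt pr < 1) ->
  (0 < N)%nat ->
  phiN N K q m beta lam 0 = ln (sigmaQ beta lam (q K)) + parisi_f K q m beta lam 0 0.
Proof.
intros _ HK H0 Hq _ _ _ HP Hx HN.
assert (Hq1 : 0 <= q 1%nat) by (pose proof (Hq 1%nat ltac:(lia)) as H; simpl in H; lra).
pose proof (x_tail_bound K q m Hq _ H0 Hx) as HT.
set (X := ln (sigmaQ beta lam (q K)) + fdown K q m beta lam K 0).
(* [Z_0] does not depend on the disorder: [log Z_0 = N X]. *)
assert (EZ : (fun J => ln (Zlev N K q m beta lam 0 K J (fun _ _ => 0))) = (fun _ => INR N * X)).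
{ apply functional_extensionality. intros J.
  rewrite (Zlev_at_0 N K q m beta lam Hq HT HP K (le_n K)), ln_exp, Nat.sub_diag.
  exact (rsum_const N X). }
unfold phiN. rewrite EZ, Emat_const, parisi_f_at_0 by assumption.
unfold X. field. apply not_0_INR. lia.
Qed.
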